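(* For every finite graph $G$, the branch-depth of its graphic matroid $M(G)$ is at most the tree-depth $\mathrm{td}(G)$.
   Context: The graphic matroid $M(G)$ has ground set $E(G)$, with a set of edges independent iff it is acyclic. For a rooted tree $T$, $\|T\|$ is its number of edges and its depth is the number of edges of a longest root-to-leaf path. A depth-decomposition of a finite matroid $M$ (rank function $r$) is a pair $(T,f)$ with $T$ a rooted tree and $f:M\to V(T)$ such that (1) $r(M)=\|T\|$ and (2) $r(X)\le\|T^*(X)\|$ for every $X\subseteq M$, where $T^*(X)$ is the union of the paths from the root to all vertices of $f(X)$. The branch-depth $\mathrm{bd}(M)$ is the minimum depth of $T$ over all depth-decompositions $(T,f)$ of $M$. For a rooted tree $T$, $\mathrm{cl}(T)$ is the graph on $V(T)$ with an edge between $u$ and $v$ whenever one is an ancestor of the other. The tree-depth $\mathrm{td}(G)$ is the smallest depth of a rooted tree $T$ with $V(T)=V(G)$ and $G\subseteq\mathrm{cl}(T)$. *)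

From mathcomp Require Import all_boot.
From Stdlib Require Import ClassicalDescription.
Set Implicit Arguments. Unset Strict Implicit. Unset Printing Implicit Defensive.

Definition pbool (P : Prop) : bool :=
  if excluded_middle_informative P then true else false.

(* ---------- Finite (multi)graphs ----------
   A finite graph is given by a finite vertex type V, a finite edge type E
   and the endpoint map ends : E -> V * V (loops and parallel edges allowed;
   the order of the two endpoints is irrelevant). *)
Definition joins (V E : finType) (ends : E -> V * V) (e : E) (x y : V) : Prop :=
  ends e = (x, y) \/ ends e = (y, x).

Definition has_cycle_in (V E : finType) (ends : E -> V * V) (F : {set E}) : Prop :=
  exists (k : nat) (vs : 'I_k.+1 -> V) (es : 'I_k.+1 -> E),
    injective vs /\ injective es /\
    (forall i, es i \in F) /\
    (forall i, joins ends (es i) (vs i) (vs (ordS i))).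

Definition acyclic (V E : finType) (ends : E -> V * V) (F : {set E}) : Prop :=
  ~ has_cycle_in ends F.

Definition graphic_rank (V E : finType) (ends : E -> V * V) (X : {set E}) : nat :=
  \max_(F : {set E} | (F \subset X) && pbool (acyclic ends F)) #|F|.

(* Its edges are the pairs {w, par w} for w <> root, so ||T|| = #|W| - 1.
   u is an ancestor of v (u = v allowed) iff fconnect par v u. *)
Definition rooted_tree (W : finType) (root : W) (par : W -> W) : Prop :=
  par root = root /\ forall w, fconnect par w root.

Definition tree_depth_le (W : finType) (root : W) (par : W -> W) (d : nat) : Prop :=
  forall w, iter d par w = root.

(* ||T^*(X)||: number of edges of the union of the root paths to f(X),
   i.e. number of non-root vertices that are ancestors of some f x, x in X. *)
Definition tstar_size (E W : finType) (root : W) (par : W -> W) (f : E -> W)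
    (X : {set E}) : nat :=
  #|[set w : W | (w != root) && [exists x in X, fconnect par (f x) w]]|.

Definition depth_decomposition (E : finType) (r : {set E} -> nat)
    (W : finType) (root : W) (par : W -> W) (f : E -> W) : Prop :=
  rooted_tree root par /\
  r setT = #|W|.-1 /\
  forall X : {set E}, r X <= tstar_size root par f X.

Definition branch_depth_le (E : finType) (r : {set E} -> nat) (k : nat) : Prop :=
  exists (W : finType) (root : W) (par : W -> W) (f : E -> W),
    depth_decomposition r root par f /\ tree_depth_le root par k.

(* Every edge of G must be an edge of cl(T),
   i.e. join two distinct vertices one of which is an ancestor of the other. *)
Definition closure_contains (V E : finType) (ends : E -> V * V)
    (par : V -> V) : Prop :=
  forall e, (ends e).1 != (ends e).2 /\
    (fconnect par (ends e).1 (ends e).2 || fconnect par (ends e).2 (ends e).1).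

Definition tree_depth_graph_le (V E : finType) (ends : E -> V * V) (k : nat) : Prop :=
  exists (root : V) (par : V -> V),
    rooted_tree root par /\ closure_contains ends par /\ tree_depth_le root par k.

From mathcomp Require Import all_boot zify.
From Stdlib Require Import ClassicalDescription.
Set Implicit Arguments. Unset Strict Implicit. Unset Printing Implicit Defensive.

(* Take an elimination tree T of G of depth at most k.  Each connected component of G
   has a shallowest vertex, its top, which is an ancestor of the whole component.  Merging
   every top into the root gives a rooted tree of depth at most k whose number of edges is
   |V| minus the number of components, i.e. the rank of M(G); map every edge to its deeper
   endpoint.  An acyclic F has at most as many edges as there are non-top vertices incident
   with F, since component tops and F-isolated vertices lie in distinct components of F; each
   such vertex is an ancestor of the deeper end of an edge of F, hence lies in T*(F). *)

Lemma pboolP (P : Prop) : reflect P (pbool P).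
Proof. by rewrite /pbool; case: excluded_middle_informative => h; constructor. Qed.

Lemma connect_ind (T : finType) (e : rel T) (P : T -> Prop) x :
  P x -> (forall y z, P y -> e y z -> P z) -> forall y, connect e x y -> P y.
Proof.
move=> Px Pe y /connectP [p + ->]; elim: p x Px => [|z p IHp] x Px //=.
by case/andP=> /(Pe _ _ Px) /IHp.
Qed.

Lemma val_iter_ordS k m (i : 'I_k.+1) : val (iter m (@ordS _) i) = (i + m) %% k.+1.
Proof.
elim: m => [|m IHm]; first by rewrite addn0 modn_small.
by rewrite iterS /= IHm -addn1 modnDml addn1 addnS.
Qed.

Lemma connect_around_cycle (T : finType) (r : rel T) k (vs : 'I_k.+1 -> T) i0 :
  (forall j, j != i0 -> r (vs j) (vs (ordS j))) -> connect r (vs (ordS i0)) (vs i0).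
Proof.
move=> rvs; have lt_i0 := ltn_ord i0.
have walk m : m <= k -> connect r (vs (ordS i0)) (vs (iter m (@ordS _) (ordS i0))).
  elim: m => [|m IHm] le_mk; first exact: connect0.
  apply: connect_trans (IHm (ltnW le_mk)) (connect1 _); rewrite iterS; apply: rvs.
  apply/eqP => /(congr1 val); rewrite val_iter_ordS /= modnDml.
  have [lt_k|ge_k] := ltnP (i0.+1 + m) k.+1; first by rewrite modn_small //; lia.
  have -> : i0.+1 + m = (i0 + m - k) + k.+1 by lia.
  by rewrite modnDr modn_small; lia.
suff iter_k : iter k (@ordS _) (ordS i0) = i0 by rewrite -{2}iter_k; exact: walk.
by apply: val_inj; rewrite val_iter_ordS /= modnDml addSn -addnS modnDr modn_small.
Qed.

Section Graph.
Variables (V E : finType) (ends : E -> V * V).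
Implicit Types (F X : {set E}) (e : E) (x y : V).

Definition joinsb e x y : bool := (ends e == (x, y)) || (ends e == (y, x)).

Lemma joinsP e x y : reflect (joins ends e x y) (joinsb e x y).
Proof. by apply: (iffP orP) => -[/eqP|] ?; [left|right|left|right] => //; apply/eqP. Qed.

Lemma joinsb_sym e x y : joinsb e x y = joinsb e y x.
Proof. by rewrite /joinsb orbC. Qed.

Lemma joinsb_ends e : joinsb e (ends e).1 (ends e).2.
Proof. by rewrite /joinsb -surjective_pairing eqxx. Qed.

Lemma joinsb_cases e x y : joinsb e x y ->
  (x = (ends e).1 /\ y = (ends e).2) \/ (x = (ends e).2 /\ y = (ends e).1).
Proof. by rewrite /joinsb; case: (ends e) => a b /orP[] /eqP[-> ->]; [left|right]. Qed.

Definition link F : rel V := fun x y => [exists e in F, joinsb e x y].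

Lemma link_joins F e x y : e \in F -> joinsb e x y -> link F x y.
Proof. by move=> eF exy; apply/existsP; exists e; rewrite eF. Qed.

Lemma link_ends F e : e \in F -> link F (ends e).1 (ends e).2.
Proof. by move/link_joins; apply; apply: joinsb_ends. Qed.

Lemma link_sym F : symmetric (link F).
Proof. by move=> x y; apply: eq_existsb => e; rewrite joinsb_sym. Qed.

Lemma connect_link_sym F : connect_sym (link F).
Proof. exact/sym_connect_sym/link_sym. Qed.

Lemma connect_linkS F F' x y : F \subset F' ->
  connect (link F) x y -> connect (link F') x y.
Proof.
move=> sFF'; apply: connect_sub => {}x {}y /existsP [e /andP [eF exy]].
by apply/connect1/(link_joins (subsetP sFF' e eF)).
Qed.

Lemma connect_link0 x y : connect (link set0) x y -> y = x.
Proof. by case/connectP => -[_ -> //|z p] /= /andP [/existsP [e]]; rewrite inE. Qed.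

Definition incident F x := [exists e in F, (x == (ends e).1) || (x == (ends e).2)].

Lemma connect_link_isolated F x y : ~~ incident F x -> connect (link F) x y -> y = x.
Proof.
move=> x_isol; move: y; apply: (connect_ind (P := eq^~ x)) => // u z ->.
case/existsP => e /andP [eF /joinsb_cases ends_e]; case/negP: x_isol; apply/existsP; exists e.
by rewrite eF; case: ends_e => -[-> _]; rewrite eqxx ?orbT.
Qed.

Lemma connect_linkD1 F e x y : e \in F -> connect (link F) x y ->
  let C := connect (link (F :\ e)) in
  [\/ C x y, C x (ends e).1 /\ C (ends e).2 y | C x (ends e).2 /\ C (ends e).1 y].
Proof.
move=> eF + C; move: y.
pose P y := [\/ C x y, C x (ends e).1 /\ C (ends e).2 y | C x (ends e).2 /\ C (ends e).1 y].
apply: (connect_ind (P := P)) => [|u v Cu /existsP [e' /andP [e'F e'uv]]].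
  exact/Or31/connect0.
have [e'e | ne'] := eqVneq e' e.
  subst e'; case: (joinsb_cases e'uv) => -[-> ->] in Cu *.
    case: Cu => [Cx1 | [Cx1 _] | [Cx2 _]].
    - exact/Or32/(conj Cx1 (connect0 _ _)).
    - exact/Or32/(conj Cx1 (connect0 _ _)).
    - exact/Or31/Cx2.
  case: Cu => [Cx2 | [Cx1 _] | [Cx2 _]].
  - exact/Or33/(conj Cx2 (connect0 _ _)).
  - exact/Or31/Cx1.
  - exact/Or33/(conj Cx2 (connect0 _ _)).
have Cuv : C u v by apply/connect1/(link_joins _ e'uv); rewrite !inE ne'.
have Ctrans := @connect_trans _ (link (F :\ e)).
case: Cu => [Cxu | [Cx1 C2u] | [Cx2 C1u]].
- exact/Or31/(Ctrans _ _ _ Cxu Cuv).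
- exact/Or32/(conj Cx1 (Ctrans _ _ _ C2u Cuv)).
- exact/Or33/(conj Cx2 (Ctrans _ _ _ C1u Cuv)).
Qed.

Lemma acyclicS F F' : F \subset F' -> acyclic ends F' -> acyclic ends F.
Proof.
move=> sFF' acF' [k [vs [es [vs_inj [es_inj [es_in es_joins]]]]]]; apply: acF'.
by exists k, vs, es; do 3!split=> //; move=> i; apply: (subsetP sFF').
Qed.

Lemma acyclic0 : acyclic ends set0.
Proof. by move=> [k [vs [es [_ [_ [/(_ ord0) + _]]]]]]; rewrite inE. Qed.

Lemma joinsb_nth_inj e x0 s i j : uniq s -> i.+1 < size s -> j.+1 < size s ->
  joinsb e (nth x0 s i) (nth x0 s i.+1) -> joinsb e (nth x0 s j) (nth x0 s j.+1) -> i = j.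
Proof.
move=> s_uniq lt_i lt_j /joinsb_cases ends_i /joinsb_cases ends_j.
have nth_inj u v : u < size s -> v < size s -> nth x0 s u = nth x0 s v -> u = v.
  by move=> lt_u lt_v /eqP; rewrite nth_uniq // => /eqP.
case: ends_i ends_j => -[Ei Ei1] [] [Ej Ej1].
- by apply: nth_inj (ltnW lt_i) (ltnW lt_j) _; rewrite Ei Ej.
- have := nth_inj _ _ (ltnW lt_i) lt_j (etrans Ei (esym Ej1)).
  by have := nth_inj _ _ lt_i (ltnW lt_j) (etrans Ei1 (esym Ej)); lia.
- have := nth_inj _ _ (ltnW lt_i) lt_j (etrans Ei (esym Ej1)).
  by have := nth_inj _ _ lt_i (ltnW lt_j) (etrans Ei1 (esym Ej)); lia.
- by apply: nth_inj (ltnW lt_i) (ltnW lt_j) _; rewrite Ei Ej.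
Qed.

Definition link_edge F e0 x y := odflt e0 [pick e in F | joinsb e x y].

Lemma link_edgeP F e0 x y : link F x y ->
  link_edge F e0 x y \in F /\ joinsb (link_edge F e0 x y) x y.
Proof.
rewrite /link_edge => /existsP [e exy]; case: pickP => [e' /andP [] // | /(_ e)].
by rewrite exy.
Qed.

Lemma uniq_path_cycle F e a p : e \in F -> uniq (a :: p) ->
  path (link (F :\ e)) a p -> joinsb e (last a p) a -> has_cycle_in ends F.
Proof.
move=> eF ap_uniq /(pathP a) p_link e_closes.
set s := a :: p; set n := size p.
pose es (i : 'I_n.+1) := if i < n then link_edge (F :\ e) e (nth a s i) (nth a s i.+1) else e.
have es_path (i : 'I_n.+1) : i < n -> es i \in F :\ e /\ joinsb (es i) (nth a s i) (nth a s i.+1).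
  by move=> lt_in; rewrite /es lt_in; apply/link_edgeP/p_link.
have last_i (i : 'I_n.+1) : ~~ (i < n) -> val i = n.
  by move=> /negbTE ge_in; apply/eqP; rewrite eqn_leq -ltnS ltn_ord leqNgt ge_in.
exists n, (fun i => nth a s i), es; split.
  by move=> i j /= /eqP; rewrite nth_uniq //= ?ltn_ord // => /eqP /val_inj.
split.
  move=> i j; case: (boolP (i < n)) => lt_in; case: (boolP (j < n)) => lt_jn.
  - have [_ Ji] := es_path _ lt_in; have [_ Jj] := es_path _ lt_jn.
    move=> eij; apply/val_inj/(joinsb_nth_inj (e := es i) (x0 := a) ap_uniq);
      [rewrite ltnS; exact: lt_in | rewrite ltnS; exact: lt_jn | exact: Ji |
       rewrite eij; exact: Jj].
  - have [+ _] := es_path _ lt_in => /[swap] ->.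
    by rewrite {1}/es ifN // setD11.
  - have [+ _] := es_path _ lt_jn => /[swap] <-.
    by rewrite {1}/es ifN // setD11.
  - by move=> _; apply: val_inj; rewrite (last_i i lt_in) (last_i j lt_jn).
split=> i; case: (boolP (i < n)) => lt_in.
- by have [/setD1P [] _] := es_path _ lt_in.
- by rewrite /es (negbTE lt_in).
- have [_ /joinsP] := es_path _ lt_in; rewrite /= modn_small //.
- rewrite /es (negbTE lt_in) /= last_i // modnn.
  by apply/joinsP; rewrite -(last_nth a).
Qed.

Lemma acyclic_disconnect F e : acyclic ends F -> e \in F ->
  ~~ connect (link (F :\ e)) (ends e).1 (ends e).2.
Proof.
move=> acF eF; apply/negP => /connectP [q pq e2]; move: pq e2.
case/shortenP => p pth p_uniq _ e2; apply: acF.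
by apply: (uniq_path_cycle eF p_uniq pth); rewrite -e2 joinsb_sym joinsb_ends.
Qed.

Lemma acyclicU1 F e : acyclic ends F ->
  ~~ connect (link F) (ends e).1 (ends e).2 -> acyclic ends (e |: F).
Proof.
move=> acF not_conn [k [vs [es [vs_inj [es_inj [es_in es_joins]]]]]].
have es_F j : es j != e -> es j \in F by move: (es_in j); rewrite !inE => /orP [->|].
case: (pickP (fun i => es i == e)) => [i0 /eqP ei0 | not_e]; last first.
  by apply: acF; exists k, vs, es; do 3!split=> //; move=> i; rewrite es_F ?not_e.
have F_around : connect (link F) (vs (ordS i0)) (vs i0).
  apply: connect_around_cycle => j ne_j; apply: (link_joins (e := es j)); last exact/joinsP.
  by apply: es_F; rewrite -ei0 (inj_eq es_inj).
move: (es_joins i0) not_conn; rewrite ei0 => /joinsP /joinsb_cases [] [<- <-].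
  by rewrite connect_link_sym F_around.
by rewrite F_around.
Qed.

Definition separated F (R : {set V}) :=
  {in R &, forall r1 r2, r1 != r2 -> ~~ connect (link F) r1 r2}.

Lemma card_covering F (R : {set V}) :
  (forall x, exists2 r, r \in R & connect (link F) x r) -> #|V| <= #|F| + #|R|.
Proof.
have [n] := ubnP #|F|; elim: n F R => // n IHn F R lt_Fn cover.
have [F0 | [e eF]] := set_0Vmem F.
  rewrite F0 cards0 -cardsT subset_leq_card //; apply/subsetP => x _.
  by move: (cover x); rewrite F0 => -[r rR /connect_link0 <-].
have Csym := connect_link_sym (F :\ e); have Ctrans := @connect_trans _ (link (F :\ e)).
have [r1 r1R C1] := cover (ends e).1.
(* Removing [e] may split a component; one endpoint of [e] then becomes a new representative. *)
pose c := if connect (link (F :\ e)) (ends e).1 r1 then (ends e).2 else (ends e).1.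
have cover' x : exists2 r, r \in c |: R & connect (link (F :\ e)) x r.
  have [r rR Cxr] := cover x; rewrite /c.
  have [C'x1 | C'x1] := boolP (connect (link (F :\ e)) (ends e).1 r1);
    case: (connect_linkD1 eF Cxr) => [Cxr' | [Cx1 C2r] | [Cx2 C1r]].
  - by exists r; rewrite ?setU11 ?setU1r.
  - by exists r1; rewrite ?setU1r //; apply: Ctrans Cx1 C'x1.
  - by exists (ends e).2; rewrite ?setU11.
  - by exists r; rewrite ?setU11 ?setU1r.
  - by exists (ends e).1; rewrite ?setU11.
  - case: (connect_linkD1 eF C1) => [C1' | [_ C2r1] | [_ C1']]; try by rewrite C1' in C'x1.
    by exists r1; rewrite ?setU1r //; apply: Ctrans Cx2 C2r1.
have lt_F'n : #|F :\ e| < n by move: lt_Fn; rewrite (cardsD1 e) eF.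
have := IHn _ _ lt_F'n cover'.
by move/leq_trans; apply; rewrite cardsU1 (cardsD1 e F) eF; case: (c \in R) => /=; lia.
Qed.

Lemma card_acyclic_separated F (R : {set V}) :
  acyclic ends F -> separated F R -> #|F| + #|R| <= #|V|.
Proof.
have [n] := ubnP #|F|; elim: n F R => // n IHn F R lt_Fn acF sepR.
have [F0 | [e eF]] := set_0Vmem F; first by rewrite F0 cards0 max_card.
have Csym := connect_link_sym (F :\ e).
have sF'F : F :\ e \subset F by apply: subD1set.
have e_cut := acyclic_disconnect acF eF.
(* Whichever endpoint of [e] is not attached to [R] in [F :\ e] can be added to [R]. *)
pose c := if [exists r in R, connect (link (F :\ e)) r (ends e).1] then (ends e).2
          else (ends e).1.
have c_sep r : r \in R -> ~~ connect (link (F :\ e)) r c.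
  move=> rR; rewrite /c; case: existsP => [[r1 /andP [r1R C1]] | no_r]; last first.
    by apply/negP => Cr1; apply: no_r; exists r; rewrite rR.
  apply/negP => Cr2; have [r1r | ne] := eqVneq r1 r.
    by subst r1; move: e_cut; rewrite Csym in C1; rewrite (connect_trans C1 Cr2).
  move/negP: (sepR _ _ r1R rR ne); apply.
  apply: connect_trans (connect_linkS sF'F C1) _.
  apply: connect_trans (connect1 (link_ends eF)) _.
  by apply: connect_linkS sF'F _; rewrite connect_link_sym.
have cR : c \notin R by apply/negP => /c_sep; rewrite connect0.
have sepR' : separated (F :\ e) (c |: R).
  move=> r1 r2; rewrite !inE => /orP [/eqP -> | r1R] /orP [/eqP -> | r2R] ne.
  - by rewrite eqxx in ne.
  - by rewrite Csym c_sep.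
  - exact: c_sep.
  - by apply: contraNN (sepR _ _ r1R r2R ne); apply: connect_linkS.
have lt_F'n : #|F :\ e| < n by move: lt_Fn; rewrite (cardsD1 e) eF.
have := IHn _ _ lt_F'n (acyclicS sF'F acF) sepR'.
by rewrite cardsU1 cR (cardsD1 e F) eF; lia.
Qed.

Lemma leq_graphic_rank X F : F \subset X -> acyclic ends F -> #|F| <= graphic_rank ends X.
Proof.
move=> sFX acF; apply: (leq_bigmax_cond (F := fun F : {set E} => #|F|)).
by rewrite sFX; apply/pboolP.
Qed.

Lemma graphic_rank_leq X n :
  (forall F, F \subset X -> acyclic ends F -> #|F| <= n) -> graphic_rank ends X <= n.
Proof. by move=> bnd; apply/bigmax_leqP => F /andP [sFX /pboolP]; apply: bnd. Qed.

Lemma graphic_rank_witness X :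
  exists F, [/\ F \subset X, acyclic ends F & graphic_rank ends X = #|F|].
Proof.
pose P F := (F \subset X) && pbool (acyclic ends F).
have [|F /andP [sFX /pboolP acF] rankF] := @eq_bigmax_cond _ P (fun F : {set E} => #|F|).
  by apply/card_gt0P; exists set0; rewrite unfold_in /P sub0set; apply/pboolP/acyclic0.
by exists F.
Qed.

Lemma max_acyclic_spanning X F : F \subset X -> acyclic ends F -> graphic_rank ends X = #|F| ->
  {in X, forall e, connect (link F) (ends e).1 (ends e).2}.
Proof.
move=> sFX acF rankF e eX; apply/negPn/negP => e_cut.
have eF : e \notin F by apply: contraNN e_cut => eF; apply/connect1/link_ends.
have seFX : e |: F \subset X by rewrite subUset sub1set eX sFX.
by have := leq_graphic_rank seFX (acyclicU1 acF e_cut); rewrite rankF cardsU1 eF ltnn.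
Qed.

End Graph.

Section RootedTree.
Variables (V : finType) (root : V) (par : V -> V).
Hypothesis tree : rooted_tree root par.
Implicit Types u v a b : V.

Lemma par_root : par root = root. Proof. by case: tree. Qed.

Lemma fconnect_root v : fconnect par v root. Proof. by case: tree. Qed.

Lemma iter_par_root n : iter n par root = root.
Proof. by elim: n => //= n ->; rewrite par_root. Qed.

Lemma fconnect_iterP v a : fconnect par v a -> exists n, a = iter n par v.
Proof. by move/iter_findex => <-; eexists. Qed.

Lemma fconnect_rootE a : fconnect par root a -> a = root.
Proof. by case/fconnect_iterP => n ->; rewrite iter_par_root. Qed.

Lemma ex_iter_par_root v : exists n, iter n par v == root.
Proof. by have /fconnect_iterP [n ->] := fconnect_root v; exists n. Qed.

Definition depth v := ex_minn (ex_iter_par_root v).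

Lemma iter_depth v : iter (depth v) par v = root.
Proof. by rewrite /depth; case: ex_minnP => m /eqP. Qed.

Lemma depth_min v n : iter n par v = root -> depth v <= n.
Proof. by rewrite /depth; case: ex_minnP => m _ min_m /eqP; apply: min_m. Qed.

Lemma depth_root : depth root = 0.
Proof. by apply/eqP; rewrite -leqn0 depth_min. Qed.

Lemma depth_eq0 v : depth v = 0 -> v = root.
Proof. by move=> dv0; rewrite -(iter_depth v) dv0. Qed.

Lemma depth_ancestor v a : fconnect par v a -> a != v -> depth a < depth v.
Proof.
case/fconnect_iterP => -[|i] ->; first by rewrite eqxx.
move=> ne; have [lt_i | ge_i] := ltnP i (depth v).
  apply: leq_ltn_trans (depth_min (n := depth v - i.+1) _) _; last by lia.
  by rewrite -iterD subnK // iter_depth.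
have -> : iter i.+1 par v = root by rewrite -(subnK (leqW ge_i)) iterD iter_depth iter_par_root.
rewrite depth_root lt0n; apply/eqP => /depth_eq0 vr.
by move: ne; rewrite vr iter_par_root eqxx.
Qed.

Lemma depth_ancestor_le v a : fconnect par v a -> depth a <= depth v.
Proof. by case: (eqVneq a v) => [-> // | ne] /depth_ancestor/(_ ne)/ltnW. Qed.

Lemma ancestor_antisym a b : fconnect par a b -> fconnect par b a -> a = b.
Proof.
move=> ab ba; apply/eqP/negPn/negP => ne.
by have := depth_ancestor ab; have := depth_ancestor ba ne; rewrite eq_sym ne; lia.
Qed.

Lemma ancestors_comparable v a b :
  fconnect par v a -> fconnect par v b -> fconnect par a b || fconnect par b a.
Proof.
case/fconnect_iterP => i ->; case/fconnect_iterP => j ->.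
have [le_ij | /ltnW le_ji] := leqP i j.
  by rewrite -(subnK le_ij) iterD fconnect_iter.
by rewrite -(subnK le_ji) iterD fconnect_iter orbT.
Qed.

Lemma fconnect_parP v a : fconnect par v a -> a = v \/ fconnect par (par v) a.
Proof. by case/fconnect_iterP => -[|n] ->; [left | right; rewrite iterSr fconnect_iter]. Qed.

Lemma depth_par v : v != root -> depth (par v) < depth v.
Proof.
move=> v_root; apply: depth_ancestor (fconnect1 _ _) _; apply: contra_neq v_root => pv.
have fixed n : iter n par v = v by elim: n => //= n ->.
by rewrite -(iter_depth v) fixed.
Qed.

Lemma fconnect_par v a : fconnect par v a -> fconnect par (par v) (par a).
Proof. by case/fconnect_iterP => n ->; rewrite -iterS iterSr fconnect_iter. Qed.

End RootedTree.

Section InducedTree.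
Variables (V : finType) (root : V) (par : V -> V) (S : pred V).
Hypotheses (tree : rooted_tree root par) (S_root : S root).

Local Notation VS := {v : V | S v}.

Definition induced_root : VS := exist _ root S_root.

(* The parent of [w] is its nearest proper ancestor in [S] ([root] at worst). *)
Definition induced_par (w : VS) : VS :=
  [arg max_(a > induced_root | fconnect par (par (val w)) (val a)) depth tree (val a)].

Lemma induced_parP (w : VS) :
  fconnect par (par (val w)) (val (induced_par w)) /\
  forall a : VS, fconnect par (par (val w)) (val a) -> fconnect par (val (induced_par w)) (val a).
Proof.
rewrite /induced_par; case: arg_maxnP => [|p anc_p max_p]; first exact: fconnect_root.
split=> // a anc_a; case/orP: (ancestors_comparable anc_p anc_a) => // anc_pa.
have [-> // | ne] := eqVneq (val a) (val p).
apply: contraTT (max_p a anc_a) => _.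
by rewrite -ltnNge (depth_ancestor tree anc_pa) // eq_sym.
Qed.

Lemma induced_fconnect (a b : VS) : fconnect par (val b) (val a) -> fconnect induced_par b a.
Proof.
have [n] := ubnP (depth tree (val b)); elim: n b => // n IHn b lt_bn anc_ba.
have [-> | ne] := eqVneq a b; first exact: connect0.
have lt_ab := depth_ancestor tree anc_ba ne.
have b_root : val b != root by apply: contraTneq lt_ab => ->; rewrite depth_root.
case: (fconnect_parP anc_ba) => [/val_inj ab | anc_pa]; first by rewrite ab eqxx in ne.
have [anc_pb nearest] := induced_parP b.
apply: connect_trans (fconnect1 _ b) (IHn _ _ (nearest a anc_pa)).
by have := depth_ancestor_le tree anc_pb; have := depth_par tree b_root; lia.
Qed.

Lemma induced_iter_fconnect n (w : VS) :
  fconnect par (iter n par (val w)) (val (iter n induced_par w)).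
Proof.
elim: n => [|n IHn]; first exact: connect0.
rewrite !iterS; apply: connect_trans (fconnect_par IHn) _; exact: (induced_parP _).1.
Qed.

Lemma induced_rooted_tree : rooted_tree induced_root induced_par.
Proof.
split=> [|w]; last exact/induced_fconnect/fconnect_root.
by apply/val_inj/(fconnect_rootE tree); rewrite -[X in fconnect _ X](par_root tree);
  apply: (induced_parP _).1.
Qed.

Lemma induced_tree_depth_le k :
  tree_depth_le root par k -> tree_depth_le induced_root induced_par k.
Proof.
by move=> depth_k w; apply/val_inj/(fconnect_rootE tree); rewrite -(depth_k (val w));
  apply: induced_iter_fconnect.
Qed.

End InducedTree.

Section TreeDepthDecomposition.
Variables (V E : finType) (ends : E -> V * V) (root : V) (par : V -> V).
Hypotheses (tree : rooted_tree root par) (closed : closure_contains ends par).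

Local Notation connected := (connect (link ends setT)).
Local Notation depth := (depth tree).

Definition comp_top x := [arg min_(y < x | connected x y) depth y].

Lemma comp_topP x :
  connected x (comp_top x) /\ forall y, connected x y -> depth (comp_top x) <= depth y.
Proof. by rewrite /comp_top; case: arg_minnP => //; apply: connect0. Qed.

Lemma link_comparable X u v : link ends X u v -> fconnect par u v || fconnect par v u.
Proof.
case/existsP => e /andP [_ /joinsb_cases ends_e]; have [_] := closed e.
by case: ends_e => -[-> ->] //; rewrite orbC.
Qed.

Lemma comp_top_ancestor x y : connected (comp_top x) y -> fconnect par y (comp_top x).
Proof.
have [Cxt min_t] := comp_topP x; set t := comp_top x => Cty.
suff : connected t y /\ fconnect par y t by case.
move: y Cty; apply: (connect_ind (P := fun y => connected t y /\ fconnect par y t)).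
  by split; apply: connect0.
move=> u v [Ctu anc_tu] l_uv; have Ctv := connect_trans Ctu (connect1 l_uv); split=> //.
case/orP: (link_comparable l_uv) => [anc_vu | anc_uv]; last exact: connect_trans anc_uv anc_tu.
case/orP: (ancestors_comparable anc_vu anc_tu) => // anc_tv.
have [-> | ne] := eqVneq v t; first exact: connect0.
by have := min_t v (connect_trans Cxt Ctv); rewrite leqNgt (depth_ancestor tree anc_tv ne).
Qed.

Lemma comp_top_eq x y : connected x y -> comp_top x = comp_top y.
Proof.
move=> Cxy; have [Cx _] := comp_topP x; have [Cy _] := comp_topP y.
have Ctt : connected (comp_top x) (comp_top y).
  by rewrite connect_link_sym in Cx; apply: connect_trans Cx (connect_trans Cxy Cy).
apply: (ancestor_antisym tree); apply: comp_top_ancestor => //.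
by rewrite connect_link_sym.
Qed.

Lemma comp_top_idem x : comp_top (comp_top x) = comp_top x.
Proof. by rewrite -(comp_top_eq (comp_topP x).1). Qed.

Lemma comp_top_root : comp_top root = root.
Proof.
by have := (comp_topP root).2 root (connect0 _ _); rewrite depth_root leqn0 => /eqP /depth_eq0.
Qed.

(* The top of every component is merged into [root]; the other vertices are kept. *)
Definition kept_vertex := [pred v | (v == root) || (comp_top v != v)].

Lemma kept_root : kept_vertex root. Proof. by rewrite inE eqxx. Qed.

Local Notation Vkept := {v : V | kept_vertex v}.
Local Notation root_kept := (induced_root kept_root).
Local Notation par_kept := (induced_par tree kept_root).

Definition deeper_end e := if fconnect par (ends e).1 (ends e).2 then (ends e).1 else (ends e).2.

Lemma deeper_end_ancestors e :
  fconnect par (deeper_end e) (ends e).1 /\ fconnect par (deeper_end e) (ends e).2.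
Proof.
have [_] := closed e; rewrite /deeper_end.
by case: ifP => [? _ | _ /= ?]; split=> //; apply: connect0.
Qed.

Lemma kept_deeper_end e : kept_vertex (deeper_end e).
Proof.
apply/orP; right; apply/eqP => top_d; have [ne _] := closed e.
set d := deeper_end e in top_d *; have [anc1 anc2] := deeper_end_ancestors e.
have C12 : connected (ends e).1 (ends e).2 by apply/connect1/link_ends; rewrite inE.
have [Cd1 Cd2] : connected d (ends e).1 /\ connected d (ends e).2.
  rewrite /d /deeper_end; case: ifP => _; split; rewrite ?connect0 //.
  by rewrite connect_link_sym.
have end_d z : fconnect par d z -> connected d z -> z = d.
  move=> anc_z Cdz; apply: (ancestor_antisym tree) anc_z.
  by rewrite -top_d; apply: comp_top_ancestor; rewrite top_d.
by rewrite (end_d _ anc1 Cd1) (end_d _ anc2 Cd2) eqxx in ne.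
Qed.

Definition decomp_map e : Vkept := insubd root_kept (deeper_end e).

Lemma val_decomp_map e : val (decomp_map e) = deeper_end e.
Proof. by rewrite val_insubd kept_deeper_end. Qed.

Definition inner_ends X := [set v | (comp_top v != v) && incident ends X v].

Lemma card_inner_ends_tstar X : #|inner_ends X| <= tstar_size root_kept par_kept decomp_map X.
Proof.
rewrite /tstar_size -(card_imset _ val_inj); apply/subset_leq_card/subsetP => v.
rewrite inE => /andP [top_v /existsP [e /andP [eX end_v]]].
have kept_v : kept_vertex v by rewrite inE top_v orbT.
apply/imsetP; exists (insubd root_kept v); last by rewrite val_insubd kept_v.
rewrite inE; apply/andP; split.
  apply/eqP => /(congr1 val); rewrite val_insubd kept_v /= => v_root.
  by move: top_v; rewrite v_root comp_top_root eqxx.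
apply/existsP; exists e; rewrite eX /=; apply: induced_fconnect.
rewrite val_insubd kept_v val_decomp_map; have [anc1 anc2] := deeper_end_ancestors e.
by case/orP: end_v => /eqP ->.
Qed.

(* Component tops and vertices missed by [F] lie in distinct components of [F]. *)
Lemma card_acyclic_inner_ends F : acyclic ends F -> #|F| <= #|inner_ends F|.
Proof.
move=> acF; suff sepR : separated ends F (~: inner_ends F).
  by have := card_acyclic_separated acF sepR; rewrite -(cardsC (inner_ends F)) leq_add2r.
move=> r1 r2; rewrite !in_setC !in_set !negb_and.
move=> /orP [/negPn top1 | isol1] /orP [/negPn top2 | isol2] ne; apply/negP => C12;
  try by rewrite (connect_link_isolated isol1 C12) eqxx in ne.
  have := comp_top_eq (connect_linkS (subsetT F) C12).
  by rewrite (eqP top1) (eqP top2) => r12; rewrite r12 eqxx in ne.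
by rewrite connect_link_sym in C12; rewrite (connect_link_isolated isol2 C12) eqxx in ne.
Qed.

Lemma graphic_rank_tstar X : graphic_rank ends X <= tstar_size root_kept par_kept decomp_map X.
Proof.
apply: graphic_rank_leq => F sFX acF; apply: leq_trans (card_acyclic_inner_ends acF) _.
apply: leq_trans (card_inner_ends_tstar X); apply/subset_leq_card/subsetP => v.
rewrite !inE => /andP [-> /existsP [e /andP [eF end_v]]].
by apply/existsP; exists e; rewrite (subsetP sFX).
Qed.

Lemma card_kept : #|{: Vkept}| = #|~: [set v | comp_top v == v]|.+1.
Proof.
have kept_tops : [pred v | kept_vertex v] =i root |: ~: [set v | comp_top v == v].
  by move=> v; rewrite !inE.
by rewrite card_sig (eq_card kept_tops) cardsU1 !inE comp_top_root eqxx.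
Qed.

Lemma graphic_rank_setT : graphic_rank ends setT = #|{: Vkept}|.-1.
Proof.
apply/eqP; rewrite eqn_leq; apply/andP; split.
  apply: leq_trans (graphic_rank_tstar setT) _; rewrite -(cardC1 root_kept).
  by apply/subset_leq_card/subsetP => w; rewrite !inE => /andP [].
have [F [_ acF rankF]] := graphic_rank_witness ends setT.
have span := max_acyclic_spanning (subsetT F) acF rankF.
have cover x : exists2 r, r \in [set v | comp_top v == v] & connect (link ends F) x r.
  exists (comp_top x); first by rewrite inE comp_top_idem.
  apply: connect_sub (comp_topP x).1 => u v /existsP [e /andP [eT /joinsb_cases ends_e]].
  by case: ends_e => -[-> ->]; rewrite ?(connect_link_sym ends F (ends e).2) span.
have := card_covering cover; rewrite card_kept rankF -(cardsC [set v | comp_top v == v]) /=.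
lia.
Qed.

End TreeDepthDecomposition.

Theorem proposition3p6 (V E : finType) (ends : E -> V * V) (k : nat) :
  tree_depth_graph_le ends k -> branch_depth_le (graphic_rank ends) k.
Proof.
move=> [root [par [tree [closed depth_k]]]].
exists {v | kept_vertex ends tree v}, (induced_root (kept_root ends tree)),
  (induced_par tree (kept_root ends tree)), (decomp_map ends tree).
split; last exact: induced_tree_depth_le.
split; first exact: induced_rooted_tree.
by split; [exact: graphic_rank_setT | exact: graphic_rank_tstar].
Qed.
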